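(* Let $\mathfrak{g}$ be the affine Lie algebra of type $D^{(1)}_4$ with the $\mathbb{Z}$-gradation of type $s=(1,1,0,1,1)$, grading element $d_s$, normalized invariant form $(\,|\,)$ and Heisenberg elements $\Lambda_{k,i}$ as described in the context. Let $W=W(t_{1,1},t_{1,2},t_{3,1},t_{3,2},\ldots)$ be a $G_{<0}$-valued (formal) function satisfying the Sato equations \[ \partial_{k,i}(W)=B_{k,i}W-W\Lambda_{k,i}\qquad (i=1,2;\ k=1,3,5,\ldots), \] understood as $\partial_{k,i}-B_{k,i}=W(\partial_{k,i}-\Lambda_{k,i})W^{-1}$, where $\partial_{k,i}=\partial/\partial t_{k,i}$ and $B_{k,i}$ is the $\mathfrak{g}_{\geq0}$-component of $W\Lambda_{k,i}W^{-1}\in\widehat{\mathfrak{g}}_{<0}\oplus\mathfrak{g}_{\geq0}$. Write $B_{1,i}=\Lambda_{1,i}+U_i$ $(i=1,2)$, where $U_i$ is $\mathfrak{g}_0(s)$-valued. Then \[ (d_s\,|\,\partial_{1,i}(U_j))+\tfrac{1}{2}(U_i\,|\,U_j)=0\qquad (i,j=1,2). \]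
   Context: $\mathfrak{g}=\mathfrak{g}(D^{(1)}_4)$ is the Lie algebra generated by $e_i,f_i,\alpha_i^\vee$ $(i=0,\ldots,4)$ and $d$ with relations $(\mathrm{ad}\,e_i)^{1-a_{ij}}(e_j)=0$, $(\mathrm{ad}\,f_i)^{1-a_{ij}}(f_j)=0$ $(i\neq j)$, $[\alpha_i^\vee,\alpha_j^\vee]=0$, $[\alpha_i^\vee,e_j]=a_{ij}e_j$, $[\alpha_i^\vee,f_j]=-a_{ij}f_j$, $[e_i,f_j]=\delta_{ij}\alpha_i^\vee$, $[d,\alpha_i^\vee]=0$, $[d,e_i]=\delta_{i0}e_0$, $[d,f_i]=-\delta_{i0}f_0$, where $A=(a_{ij})$ is the Cartan matrix with $a_{ii}=2$, $a_{2j}=a_{j2}=-1$ for $j=0,1,3,4$, and all other entries $0$. $\mathfrak{h}=\bigoplus_j\mathbb{C}\alpha_j^\vee\oplus\mathbb{C}d$; $K=\alpha_0^\vee+\alpha_1^\vee+2\alpha_2^\vee+\alpha_3^\vee+\alpha_4^\vee$. The invariant form is determined by $(\alpha_i^\vee|\alpha_j^\vee)=a_{ij}$, $(e_i|f_j)=\delta_{ij}$, $(\alpha_i^\vee|e_j)=(\alpha_i^\vee|f_j)=0$, $(d|d)=0$, $(d|\alpha_j^\vee)=\delta_{0j}$, $(d|e_j)=(d|f_j)=0$. The gradation of type $s=(1,1,0,1,1)$: $\deg\mathfrak{h}=\deg e_2=\deg f_2=0$, $\deg e_i=1$, $\deg f_i=-1$ for $i=0,1,3,4$; equivalently $\mathfrak{g}_k(s)=\{x:[d_s,x]=kx\}$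 with $d_s=4d+2\alpha_1^\vee+3\alpha_2^\vee+2\alpha_3^\vee+2\alpha_4^\vee$. $\mathfrak{g}_{<0}=\bigoplus_{k<0}\mathfrak{g}_k(s)$, $\mathfrak{g}_{\ge0}=\bigoplus_{k\ge0}\mathfrak{g}_k(s)$; $\widehat{\mathfrak{g}}_{<0}$ is the completion of $\mathfrak{g}_{<0}$ and $G_{<0}=\exp(\widehat{\mathfrak{g}}_{<0})$. Write $e_{2j}=[e_2,e_j]$. $\Lambda_{1,1}=-e_0+e_1+e_3-e_{21}+e_{23}+e_{24}$, $\Lambda_{1,2}=e_1-e_3+e_4+e_{20}+e_{21}+e_{23}$. The Heisenberg subalgebra is $\mathfrak{s}=\{x\in\mathfrak{g}:[\Lambda_{1,1},x]\in\mathbb{C}K\}=\bigoplus_k\mathfrak{s}_k(s)$, with $\mathfrak{s}_{2k-1}(s)=\mathbb{C}\Lambda_{2k-1,1}\oplus\mathbb{C}\Lambda_{2k-1,2}$ for chosen elements satisfying $[\Lambda_{2k-1,i},\Lambda_{2l-1,j}]=(2k-1)\delta_{ij}\delta_{k+l,1}K$. *)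

(* Concrete model of the affine Lie algebra g(D_4^(1)) as the
   centrally extended loop algebra  so(8) (x) C[z,z^-1] + C K + C d,
   with coefficients in an arbitrary commutative ring R (later: C = R0[i], or
   the differential algebra S of "formal functions"). *)
From HB Require Import structures.
From mathcomp Require Import all_boot all_order all_algebra.
From mathcomp Require Import reals complex.
Set Implicit Arguments.
Unset Strict Implicit.
Unset Printing Implicit Defensive.
Import Order.TTheory GRing.Theory Num.Theory.
Local Open Scope ring_scope.

(* An element  sum_p (lp p) z^p + kc K + dc d  (possibly infinitely many p's:
   this also models the completion \hat g_{<0}). *)
Record elt (R : Type) := Elt { lp : int -> 'M[R]_8 ; kc : R ; dc : R }.

Definition zsum (V : nmodType) (lo hi : int) (F : int -> V) : V :=
  \sum_(i < absz (hi - lo + 1) | lo + i%:Z <= hi) F (lo + i%:Z).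

(* weights of the diagonal grading element h_s = 2a1^v+3a2^v+2a3^v+2a4^v
   on the standard basis e1,e2,e3,e4,e_-4,e_-3,e_-2,e_-1 of C^8 *)
Definition lam (a : 'I_8) : int := nth 0 [:: 2%:Z; 1; 1; 0; 0; -1; -1; -2] a.

(* d_s-degree of the matrix unit E_ab z^p *)
Definition sdeg (p : int) (a b : 'I_8) : int := 4 * p + lam a - lam b.

Section Generic.
Variable R : comUnitRingType.

Definition halfR : R := (2%:R)^-1.

Definition Jmx : 'M[R]_8 := \matrix_(a, b) ((a : nat) + b == 7)%:R.
Definition so8 (x : 'M[R]_8) : Prop := x^T *m Jmx + Jmx *m x = 0.

Definition nform (x y : 'M[R]_8) : R := halfR * \tr (x *m y).
Definition mcom (x y : 'M[R]_8) : 'M[R]_8 := x *m y - y *m x.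

Definition ezero : elt R := Elt (fun _ => 0) 0 0.
Definition eadd (X Y : elt R) : elt R :=
  Elt (fun p => lp X p + lp Y p) (kc X + kc Y) (dc X + dc Y).
Definition eopp (X : elt R) : elt R := Elt (fun p => - lp X p) (- kc X) (- dc X).
Definition escale (c : R) (X : elt R) : elt R :=
  Elt (fun p => c *: lp X p) (c * kc X) (c * dc X).
Definition eK : elt R := Elt (fun _ => 0) 1 0.
Definition ed : elt R := Elt (fun _ => 0) 0 1.
Definition loop_at (p0 : int) (x : 'M[R]_8) : elt R :=
  Elt (fun p => if p == p0 then x else 0) 0 0.

(* Lie bracket [X, Y], valid when the loop part of X is supported in [-N, N]:
   [x z^m, y z^n] = [x,y] z^(m+n) + m delta_{m+n,0} (x|y) K,
   [d, y z^n] = n y z^n,  K central. *)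
Definition ebr (N : int) (X Y : elt R) : elt R :=
  Elt (fun p => zsum (- N) N (fun m => mcom (lp X m) (lp Y (p - m)))
                + (dc X * p%:~R) *: lp Y p - (dc Y * p%:~R) *: lp X p)
      (zsum (- N) N (fun m => m%:~R * nform (lp X m) (lp Y (- m))))
      0.

(* invariant form (X|Y), valid when the loop part of X is supported in [-N,N];
   (K|d) = 1, (K|K) = (d|d) = 0, loop part orthogonal to K and d *)
Definition eform (N : int) (X Y : elt R) : R :=
  zsum (- N) N (fun m => nform (lp X m) (lp Y (- m)))
  + kc X * dc Y + dc X * kc Y.

(* ad w, for w in \hat g_{<0} (loop part supported in p <= 0, no K, d parts)
   applied to X whose loop part is supported in p <= D *)
Definition adw (w : int -> 'M[R]_8) (D : int) (X : elt R) : elt R :=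
  Elt (fun p => zsum (p - D) 0 (fun m => mcom (w m) (lp X (p - m)))
                - (dc X * p%:~R) *: w p)
      (zsum (- D) 0 (fun m => m%:~R * nform (w m) (lp X (- m))))
      0.

(* Since w has d_s-degree <= -1 and X has loop
   support <= D (hence d_s-degree <= 4D+4), the truncations below are exact:
   the z^p-component of (ad w)^k X vanishes for k > 4(D-p)+8. *)
Definition expser (c : nat -> R) (w : int -> 'M[R]_8) (D : int) (X : elt R) :=
  Elt (fun p => \sum_(k < absz (4 * (D - p) + 9))
                  c k *: lp (iter k (adw w D) X) p)
      (\sum_(k < absz (4 * D + 9)) c k * kc (iter k (adw w D) X))
      (\sum_(k < absz (4 * D + 9)) c k * dc (iter k (adw w D) X)).

(* W X W^{-1} = exp(ad w) X  for W = exp w *)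
Definition AdW (w : int -> 'M[R]_8) (D : int) (X : elt R) : elt R :=
  expser (fun k => (k`!%:R)^-1) w D X.

(* (dW) W^{-1} = sum_k (ad w)^k (dw) / (k+1)!  for W = exp w *)
Definition dlogW (w dw : int -> 'M[R]_8) : elt R :=
  expser (fun k => (k.+1`!%:R)^-1) w 0 (Elt dw 0 0).

Definition posproj (X : elt R) : elt R :=
  Elt (fun p => \matrix_(a, b) (if 0 <= sdeg p a b then lp X p a b else 0))
      (kc X) (dc X).

Definition in_gneg (w : int -> 'M[R]_8) : Prop :=
  (forall p, so8 (w p)) /\
  (forall p (a b : 'I_8), 0 <= sdeg p a b -> w p a b = 0).

Definition Emx (i j : nat) : 'M[R]_8 := delta_mx (inord i) (inord j).
Definition Eminus (i j : nat) : 'M[R]_8 := Emx i j - Emx (7 - j) (7 - i). (* e_i - e_j *)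
Definition Eplus (i j : nat) : 'M[R]_8 := Emx i (7 - j) - Emx j (7 - i).  (* e_i + e_j *)
Definition Enegp (i j : nat) : 'M[R]_8 := Emx (7 - j) i - Emx (7 - i) j.  (* -e_i - e_j *)

Definition gen_e (i : nat) : elt R :=
  match i with
  | 0 => loop_at 1 (Enegp 0 1)          (* e_0 = E_{-theta} z *)
  | 1 => loop_at 0 (Eminus 0 1)
  | 2 => loop_at 0 (Eminus 1 2)
  | 3 => loop_at 0 (Eminus 2 3)
  | _ => loop_at 0 (Eplus 2 3)
  end.
Definition gen_f (i : nat) : elt R :=
  match i with
  | 0 => loop_at (-1) (Enegp 0 1)^T     (* f_0 = E_theta z^-1 *)
  | 1 => loop_at 0 (Eminus 0 1)^T
  | 2 => loop_at 0 (Eminus 1 2)^T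
  | 3 => loop_at 0 (Eminus 2 3)^T
  | _ => loop_at 0 (Eplus 2 3)^T
  end.
Definition coroot (i : nat) : elt R := ebr 1 (gen_e i) (gen_f i).

Definition d_s : elt R :=
  eadd (escale 4%:R ed)
   (eadd (escale 2%:R (coroot 1))
    (eadd (escale 3%:R (coroot 2))
     (eadd (escale 2%:R (coroot 3)) (escale 2%:R (coroot 4))))).

Definition e2 (j : nat) : elt R := ebr 1 (gen_e 2) (gen_e j).
Definition lcomb (s : seq (R * elt R)) : elt R :=
  foldr (fun ct acc => eadd (escale ct.1 ct.2) acc) ezero s.

Definition Lam11 : elt R :=
  lcomb [:: (-1, gen_e 0); (1, gen_e 1); (1, gen_e 3); (-1, e2 1); (1, e2 3); (1, e2 4)].
Definition Lam12 : elt R :=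
  lcomb [:: (1, gen_e 1); (-1, gen_e 3); (1, gen_e 4); (1, e2 0); (1, e2 1); (1, e2 3)].

End Generic.

Definition emap (R R' : Type) (f : R -> R') (X : elt R) : elt R' :=
  Elt (fun p => map_mx f (lp X p)) (f (kc X)) (f (dc X)).

Definition is_derivation (C : fieldType) (S : comUnitAlgType C) (D : S -> S) : Prop :=
  (forall x y, D (x + y) = D x + D y) /\
  (forall (c : C) x, D (c *: x) = c *: D x) /\
  (forall x y, D (x * y) = D x * y + x * D y).

From HB Require Import structures.
From mathcomp Require Import all_boot all_order all_algebra.
From mathcomp Require Import reals complex.
From mathcomp Require Import zify ring.
Set Implicit Arguments.
Unset Strict Implicit.
Unset Printing Implicit Defensive.
Import Order.TTheory GRing.Theory Num.Theory.
Local Open Scope ring_scope.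

(* Write U_j for the d_s-degree-0 part of [w, L_j], L_j = Lambda_{1,j}, which is
   what survives in B_{1,j} - L_j.  Invariance of the form and [d_s, w] = -w on
   the entries of w of degree -1 give (d_s | U_j) = -(w | L_j).  Since d_s and
   L_j are constant, differentiating and inserting the degree -1 part of the Sato
   equation, (dw)_{-1} = -([w, L_i] + 1/2 [w, [w, L_i]])_{-1}, yields
   (d_s | dU_j) = ([w, L_i] | L_j) + 1/2 ([w, [w, L_i]] | L_j).  By invariance the
   first term is (w | [L_i, L_j]) = 0 and the second is -([w, L_i] | [w, L_j]),
   i.e. -(U_i | U_j), since only degree-0 entries of [w, L] pair with each other. *)

Lemma zsum_recl (V : nmodType) lo hi (F : int -> V) :
  lo <= hi -> zsum lo hi F = F lo + zsum (lo + 1) hi F.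
Proof.
move=> le_lo_hi; rewrite /zsum.
have -> : absz (hi - lo + 1) = (absz (hi - (lo + 1) + 1)).+1 by lia.
rewrite big_mkcond big_ord_recl /= addr0 le_lo_hi [in RHS]big_mkcond.
congr (_ + _); apply: eq_bigr => k _.
by have -> : lo + (bump 0 k)%:Z = lo + 1 + k%:Z by rewrite /bump; lia.
Qed.

Lemma zsum_nil (V : nmodType) lo hi (F : int -> V) : hi < lo -> zsum lo hi F = 0.
Proof. by move=> lt_hi_lo; rewrite /zsum big1 // => k; lia. Qed.

Lemma zsum_eq0 (V : nmodType) lo hi (F : int -> V) :
  (forall m, F m = 0) -> zsum lo hi F = 0.
Proof. by move=> F0; rewrite /zsum big1. Qed.

Lemma zsum1 (V : nmodType) p (F : int -> V) : zsum p p F = F p.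
Proof. by rewrite zsum_recl // zsum_nil ?addr0 //; lia. Qed.

Lemma zsum_m11 (V : nmodType) (F : int -> V) : zsum (-1) 1 F = F (-1) + F 0 + F 1.
Proof. by rewrite zsum_recl // zsum_recl // zsum1 addrA. Qed.

Lemma sdegD m q (a c b : 'I_8) : sdeg (m + q) a b = sdeg m a c + sdeg q c b.
Proof. rewrite /sdeg; lia. Qed.

Lemma sdegN m (a b : 'I_8) : sdeg (- m) b a = - sdeg m a b.
Proof. rewrite /sdeg; lia. Qed.

Lemma lam_bound (a : 'I_8) : -2 <= lam a <= 2.
Proof. by case: a => [[|[|[|[|[|[|[|[|]]]]]]]] //]. Qed.

Section Grading.
Variable R : comUnitRingType.

Definition deg_lt (t : int) (f : int -> 'M[R]_8) :=
  forall p a b, t <= sdeg p a b -> f p a b = 0.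

Definition homog (k : int) (X : elt R) :=
  [/\ forall p a b, sdeg p a b != k -> lp X p a b = 0, kc X = 0 & dc X = 0].

Lemma deg_lt_homog k X : homog k X -> deg_lt (k + 1) (lp X).
Proof. by case=> hX _ _ p a b hp; apply: hX; apply/eqP; lia. Qed.

Lemma homog1_lp_m1 X : homog 1 X -> lp X (-1) = 0.
Proof.
case=> hX _ _; apply/matrixP => a b; rewrite mxE hX //.
by have := lam_bound a; have := lam_bound b; rewrite /sdeg; lia.
Qed.

Lemma homog1_lp2 X : homog 1 X -> lp X 2 = 0.
Proof.
case=> hX _ _; apply/matrixP => a b; rewrite mxE hX //.
by have := lam_bound a; have := lam_bound b; rewrite /sdeg; lia.
Qed.

Lemma mcom0l (x : 'M[R]_8) : mcom 0 x = 0.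
Proof. by rewrite /mcom mulmx0 mul0mx subrr. Qed.

Lemma mcom0r (x : 'M[R]_8) : mcom x 0 = 0.
Proof. by rewrite /mcom mulmx0 mul0mx subrr. Qed.

Lemma mxtrace_mulE (x y : 'M[R]_8) : \tr (x *m y) = \sum_a \sum_c x a c * y c a.
Proof. by apply: eq_bigr => a _; rewrite mxE. Qed.

Lemma mxtrace_mcoml (w x y : 'M[R]_8) : \tr (mcom w x *m y) = \tr (w *m mcom x y).
Proof.
rewrite /mcom mulmxBl mulmxBr !raddfB -!mulmxA /=; congr (_ - _).
by rewrite mxtrace_mulC mulmxA.
Qed.

Lemma mxtrace_mcomr (w x y : 'M[R]_8) : \tr (mcom w x *m y) = - \tr (x *m mcom w y).
Proof.
rewrite /mcom mulmxBl mulmxBr !raddfB /= opprK addrC -!mulmxA.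
by rewrite [\tr (w *m _)]mxtrace_mulC -mulmxA.
Qed.

Lemma mxtrace_mul_supp (M M' N : 'M[R]_8) :
  (forall a c, N c a != 0 -> M a c = M' a c) -> \tr (M *m N) = \tr (M' *m N).
Proof.
move=> eqM; rewrite !mxtrace_mulE; apply: eq_bigr => a _; apply: eq_bigr => c _.
by have [->|/eqM ->] := eqVneq (N c a) 0; rewrite ?mulr0.
Qed.

Lemma zsum_mxE lo hi (F : int -> 'M[R]_8) a b :
  zsum lo hi F a b = zsum lo hi (fun m => F m a b).
Proof. by rewrite /zsum summxE. Qed.

Lemma adw_deg_lt (w : int -> 'M[R]_8) D (Y : elt R) t :
  deg_lt 0 w -> dc Y = 0 -> deg_lt t (lp Y) -> deg_lt (t - 1) (lp (adw w D Y)).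
Proof.
move=> hw hdc hY p a b hp /=; rewrite hdc mul0r scale0r subr0 zsum_mxE.
apply: zsum_eq0 => m; rewrite /mcom !mxE.
have wY0 c : w m a c * lp Y (p - m) c b = 0.
  have [hm|hm] := ltP (sdeg m a c) 0; last by rewrite hw ?mul0r.
  by rewrite hY ?mulr0 //; have := sdegD m (p - m) a c b; rewrite addrC subrK; lia.
have Yw0 c : lp Y (p - m) a c * w m c b = 0.
  have [hm|hm] := ltP (sdeg m c b) 0; last by rewrite hw ?mulr0.
  by rewrite hY ?mul0r //; have := sdegD (p - m) m a c b; rewrite subrK; lia.
by rewrite !big1 ?subr0.
Qed.

Lemma iter_adw_dc (w : int -> 'M[R]_8) D (X : elt R) k :
  dc X = 0 -> dc (iter k (adw w D) X) = 0.
Proof. by case: k. Qed.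

Lemma iter_adw_deg_lt (w : int -> 'M[R]_8) D (X : elt R) t k :
  deg_lt 0 w -> dc X = 0 -> deg_lt t (lp X) ->
  deg_lt (t - k%:Z) (lp (iter k (adw w D) X)).
Proof.
move=> hw hdc hX; elim: k => [|k IH] /=; first by rewrite subr0.
have -> : t - k.+1%:Z = t - k%:Z - 1 by lia.
exact/adw_deg_lt/IH/iter_adw_dc.
Qed.

Lemma adw_kc_eq0 (w : int -> 'M[R]_8) D (Y : elt R) :
  deg_lt 0 w -> deg_lt 1 (lp Y) -> kc (adw w D Y) = 0.
Proof.
move=> hw hY /=; apply: zsum_eq0 => m.
rewrite /nform mxtrace_mulE big1 ?mulr0 // => a _; apply: big1 => c _.
have [hm|hm] := ltP (sdeg m a c) 0; last by rewrite hw ?mul0r.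
by rewrite hY ?mulr0 // sdegN; lia.
Qed.

Lemma sum_ord_trunc (F : nat -> R) N K :
  (K <= N)%N -> (forall k, (K <= k)%N -> F k = 0) ->
  \sum_(k < N) F k = \sum_(k < K) F k.
Proof.
move=> le_KN F0; rewrite (big_ord_widen N F le_KN) [RHS]big_mkcond /=.
by apply: eq_bigr => k _; case: ifP => // /negbT; rewrite -leqNgt => /F0 ->.
Qed.

Lemma expser_lp_trunc c (w : int -> 'M[R]_8) (D : int) (X : elt R) (p : int) a b K :
  (K <= absz (4 * (D - p) + 9)%R)%N ->
  (forall k, (K <= k)%N -> lp (iter k (adw w D) X) p a b = 0) ->
  lp (expser c w D X) p a b = \sum_(k < K) c k * lp (iter k (adw w D) X) p a b.
Proof.
move=> leK iter0; pose F k := c k * lp (iter k (adw w D) X) p a b.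
rewrite /= summxE (eq_bigr (fun k : 'I_ _ => F k)) => [|k _]; last by rewrite mxE.
by apply: sum_ord_trunc => // k /iter0; rewrite /F => ->; rewrite mulr0.
Qed.

End Grading.

Definition Upart (R : comUnitRingType) (w : int -> 'M[R]_8) (L : elt R) : elt R :=
  eadd (posproj (AdW w 1 L)) (eopp L).

Section AdjointAction.
Variable R : comUnitRingType.
Variable w : int -> 'M[R]_8.
Hypothesis w_neg : deg_lt 0 w.

Local Notation ad := (adw w 1).

Lemma lp_adw D (Y : elt R) p : dc Y = 0 ->
  lp (adw w D Y) p = zsum (p - D) 0 (fun m => mcom (w m) (lp Y (p - m))).
Proof. by move=> dcY; rewrite /= dcY mul0r scale0r subr0. Qed.

Lemma lp_ad_m1 (Y : elt R) : dc Y = 0 -> lp (ad Y) (-1) =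
  mcom (w (-2)) (lp Y 1) + mcom (w (-1)) (lp Y 0) + mcom (w 0) (lp Y (-1)).
Proof. by move=> dcY; rewrite lp_adw // zsum_recl // zsum_recl // zsum1 addrA. Qed.

Lemma lp_ad_0 (Y : elt R) : dc Y = 0 ->
  lp (ad Y) 0 = mcom (w (-1)) (lp Y 1) + mcom (w 0) (lp Y 0).
Proof. by move=> dcY; rewrite lp_adw // zsum_recl // zsum1. Qed.

Lemma lp_ad_1 (Y : elt R) : dc Y = 0 -> lp (ad Y) 1 = mcom (w 0) (lp Y 1).
Proof. by move=> dcY; rewrite lp_adw // zsum1. Qed.

Section Homogeneous.
Variable L : elt R.
Hypothesis homL : homog 1 L.

Let dcL : dc L = 0. Proof. by case: homL. Qed.

Lemma kc_ad : kc (ad L) = - nform (w (-1)) (lp L 1).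
Proof. by rewrite /= zsum_recl // zsum1 mul0r addr0 mulN1r. Qed.

Lemma ad_deg_lt : deg_lt 1 (lp (ad L)).
Proof. by apply: (@adw_deg_lt _ _ _ _ 2) => //; apply: deg_lt_homog. Qed.

Lemma ad2_deg_lt : deg_lt 0 (lp (ad (ad L))).
Proof. by move=> p a b hp; apply: (adw_deg_lt _ w_neg _ ad_deg_lt); rewrite ?subrr. Qed.

Lemma AdW_lpE p a b : p <= 1 -> -1 <= sdeg p a b ->
  lp (AdW w 1 L) p a b = lp L p a b + lp (ad L) p a b + halfR R * lp (ad (ad L)) p a b.
Proof.
move=> hp hs; rewrite /AdW (@expser_lp_trunc _ _ _ _ _ _ _ _ 3); first last.
- by move=> k hk; rewrite (iter_adw_deg_lt _ w_neg dcL (deg_lt_homog homL)) //; lia.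
- lia.
by rewrite !big_ord_recr big_ord0 /= add0r invr1 !mul1r.
Qed.

Lemma kc_AdW : kc (AdW w 1 L) = kc (ad L).
Proof.
have kcL : kc L = 0 by case: homL.
rewrite /AdW /= (@sum_ord_trunc _ (fun k => (k`!%:R)^-1 * kc (iter k ad L)) _ 2) //.
  by rewrite !big_ord_recr big_ord0 /= add0r invr1 !mul1r kcL add0r.
case=> [|[|k]] // _; rewrite iterS adw_kc_eq0 ?mulr0 // => p a b hp.
by rewrite (iter_adw_deg_lt _ w_neg dcL (deg_lt_homog homL)) //; lia.
Qed.

Lemma dc_AdW : dc (AdW w 1 L) = 0.
Proof. by rewrite /AdW /= big1 // => k _; rewrite iter_adw_dc ?mulr0. Qed.

Lemma lp_Upart p a b : p <= 1 ->
  lp (Upart w L) p a b = if sdeg p a b == 0 then lp (ad L) p a b else 0.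
Proof.
case: homL => degL _ _ hp.
have -> : lp (Upart w L) p a b =
    (if 0 <= sdeg p a b then lp (AdW w 1 L) p a b else 0) - lp L p a b.
  by rewrite [LHS]/= !mxE.
have [hs|hs] := ltP (sdeg p a b) 0.
  by rewrite degL ?subr0 ?ifF //; apply/eqP; lia.
rewrite AdW_lpE //; last lia.
rewrite ad2_deg_lt // mulr0 addr0 addrAC subrr add0r.
by case: eqP => // hs0; rewrite ad_deg_lt //; lia.
Qed.

Lemma kc_Upart : kc (Upart w L) = kc (ad L).
Proof.
case: homL => _ kcL _; change (kc (AdW w 1 L) - kc L = kc (ad L)).
by rewrite kc_AdW kcL subr0.
Qed.

Lemma dc_Upart : dc (Upart w L) = 0.
Proof. by change (dc (AdW w 1 L) - dc L = 0); rewrite dc_AdW dcL subr0. Qed.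

Lemma Sato_rhs_lpE p a b : p <= 1 -> sdeg p a b = -1 ->
  lp (eadd (posproj (AdW w 1 L)) (eopp (AdW w 1 L))) p a b =
  - (lp (ad L) p a b + halfR R * lp (ad (ad L)) p a b).
Proof.
case: homL => degL _ _ hp hs.
have -> : lp (eadd (posproj (AdW w 1 L)) (eopp (AdW w 1 L))) p a b =
    (if 0 <= sdeg p a b then lp (AdW w 1 L) p a b else 0) - lp (AdW w 1 L) p a b.
  by rewrite [LHS]/= !mxE.
by rewrite hs add0r AdW_lpE ?hs // degL ?hs // add0r.
Qed.

End Homogeneous.
End AdjointAction.

Lemma dlogW_lpE (R : comUnitRingType) (w dw : int -> 'M[R]_8) p a b :
  deg_lt 0 w -> deg_lt 0 dw -> sdeg p a b = -1 -> lp (dlogW w dw) p a b = dw p a b.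
Proof.
move=> hw hdw hs; rewrite /dlogW (@expser_lp_trunc _ _ _ _ _ _ _ _ 1); first last.
- by move=> k hk; rewrite (@iter_adw_deg_lt _ w 0 (Elt dw 0 0) 0 k hw erefl hdw) //; lia.
- lia.
by rewrite big_ord_recr big_ord0 /= add0r invr1 mul1r.
Qed.

Lemma inord_eq m n : (m < 8)%N -> (n < 8)%N -> (inord m == inord n :> 'I_8) = (m == n).
Proof. by move=> lt_m8 lt_n8; rewrite -val_eqE /= !inordK. Qed.

Lemma ord_eq_inord (a : 'I_8) n : (n < 8)%N -> (a == inord n) = (val a == n).
Proof. by move=> lt_n8; rewrite -val_eqE /= inordK. Qed.

Section GradingElement.
Variable R : comUnitRingType.

Definition hs_mx : 'M[R]_8 := diag_mx (\row_a (lam a)%:~R).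

Lemma hs_mxE a b : hs_mx a b = (lam a)%:~R *+ (a == b).
Proof. by rewrite !mxE. Qed.

Lemma mcom_hs_mx n (M : 'M[R]_8) a c :
  (mcom hs_mx M + (4 * n)%:~R *: M) a c = (sdeg n a c)%:~R * M a c.
Proof. by rewrite /mcom mul_diag_mx mul_mx_diag !mxE /sdeg !intrD !intrM; ring. Qed.

Lemma mcom_delta_tr (i j k l : 'I_8) : i != k -> j != l ->
  let E := delta_mx i j - delta_mx k l in
  mcom E E^T = delta_mx i i + delta_mx k k - delta_mx j j - delta_mx l l :> 'M[R]_8.
Proof.
move=> ik jl E; rewrite /E /mcom linearB /= !trmx_delta !mulmxBl !mulmxBr.
rewrite !mul_delta_mx_cond !eqxx -!(inj_eq val_inj).
move: ik jl; rewrite -!(inj_eq val_inj) => /negbTE ik /negbTE jl.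
rewrite (eq_sym (val l)) jl (eq_sym (val k)) ik !mulr0n !mulr1n !subr0 !sub0r.
by rewrite !opprK opprD !addrA.
Qed.

Lemma lp_ebr_loop0 (x y : 'M[R]_8) : lp (ebr 1 (loop_at 0 x) (loop_at 0 y)) 0 = mcom x y.
Proof. by rewrite [LHS]/= zsum_m11 /= !mcom0l !mul0r !scale0r add0r !subr0 !addr0. Qed.

Lemma kc_ebr_loop0 (x y : 'M[R]_8) : kc (ebr 1 (loop_at 0 x) (loop_at 0 y)) = 0.
Proof. by rewrite [LHS]/= zsum_m11 /= /nform !mul0mx !mxtrace0 !mulr0 !mul0r !addr0. Qed.

Lemma lp_d_s0 : lp (d_s R) 0 = hs_mx.
Proof.
pose brT (E : 'M[R]_8) := mcom E E^T.
transitivity (4%:R *: 0 + (2%:R *: brT (Eminus R 0 1) + (3%:R *: brT (Eminus R 1 2)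
    + (2%:R *: brT (Eminus R 2 3) + 2%:R *: brT (Eplus R 2 3))))).
  by congr (_ + (_ *: _ + (_ *: _ + (_ *: _ + _ *: _)))); apply: lp_ebr_loop0.
rewrite /brT !mcom_delta_tr ?inord_eq //.
apply/matrixP => a b; rewrite !mxE !ord_eq_inord //.
case: a => [[|[|[|[|[|[|[|[|//]]]]]]]] ?]; case: b => [[|[|[|[|[|[|[|[|//]]]]]]]] ?].
all: by rewrite /lam /=; ring.
Qed.

Lemma kc_d_s : kc (d_s R) = 0.
Proof.
transitivity (4%:R * 0 + (2%:R * 0 + (3%:R * 0 + (2%:R * 0 + 2%:R * 0))) : R).
  by congr (_ + (_ * _ + (_ * _ + (_ * _ + _ * _)))); apply: kc_ebr_loop0.
by rewrite !mulr0 !addr0.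
Qed.

Lemma dc_d_s : dc (d_s R) = 4%:R.
Proof. by rewrite /= !mulr0 !addr0 mulr1. Qed.

Lemma eform_d_s (Y : elt R) : eform 0 (d_s R) Y = nform hs_mx (lp Y 0) + 4%:R * kc Y.
Proof. by rewrite /eform zsum1 oppr0 lp_d_s0 kc_d_s dc_d_s mul0r addr0. Qed.

End GradingElement.

Arguments hs_mx {R}.

Section InvariantForm.
Variable R : comUnitRingType.
Implicit Types (X Y L : elt R) (x y z : 'M[R]_8).

Lemma nform0r x : nform x 0 = 0.
Proof. by rewrite /nform mulmx0 mxtrace0 mulr0. Qed.

Lemma nformDl x y z : nform (x + y) z = nform x z + nform y z.
Proof. by rewrite /nform mulmxDl mxtraceD mulrDr. Qed.

Lemma nformDr x y z : nform x (y + z) = nform x y + nform x z.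
Proof. by rewrite /nform mulmxDr mxtraceD mulrDr. Qed.

Lemma nformNl x y : nform (- x) y = - nform x y.
Proof. by rewrite /nform mulNmx raddfN mulrN. Qed.

Lemma nformZl c x y : nform (c *: x) y = c * nform x y.
Proof. by rewrite /nform -scalemxAl mxtraceZ mulrCA. Qed.

Lemma nform_mcoml x y z : nform (mcom x y) z = nform x (mcom y z).
Proof. by rewrite /nform mxtrace_mcoml. Qed.

Lemma eformDl N X Y Z : eform N (eadd X Y) Z = eform N X Z + eform N Y Z.
Proof.
rewrite /eform /zsum /=; under eq_bigr do rewrite nformDl.
by rewrite big_split /=; ring.
Qed.

Lemma eformNl N X Y : eform N (eopp X) Y = - eform N X Y.
Proof.
rewrite /eform /zsum /=; under eq_bigr do rewrite nformNl.
by rewrite sumrN; ring.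
Qed.

Lemma eformZl N c X Y : eform N (escale c X) Y = c * eform N X Y.
Proof.
rewrite /eform /zsum /=; under eq_bigr do rewrite nformZl.
by rewrite -mulr_sumr; ring.
Qed.

Lemma eform1_dcE X Y : dc X = 0 -> dc Y = 0 -> eform 1 X Y =
  nform (lp X (-1)) (lp Y 1) + nform (lp X 0) (lp Y 0) + nform (lp X 1) (lp Y (-1)).
Proof. by move=> dcX dcY; rewrite /eform zsum_m11 dcX dcY !mulr0 !mul0r !addr0. Qed.

Lemma eform1_homog1E X L : homog 1 L ->
  eform 1 X L = nform (lp X (-1)) (lp L 1) + nform (lp X 0) (lp L 0).
Proof.
move=> homL; have [_ kcL dcL] := homL.
by rewrite /eform zsum_m11 kcL dcL !mulr0 !addr0 (homog1_lp_m1 homL) nform0r addr0.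
Qed.

Lemma eform1_homog1_supp X Y L : homog 1 L ->
  (forall p a c, -1 <= p <= 0 -> sdeg p a c = -1 -> lp X p a c = lp Y p a c) ->
  eform 1 X L = eform 1 Y L.
Proof.
move=> homL eqXY; have [degL _ _] := homL.
have supp p : -1 <= p <= 0 -> nform (lp X p) (lp L (- p)) = nform (lp Y p) (lp L (- p)).
  move=> hp; congr (_ * _); apply: mxtrace_mul_supp => a c Lca.
  have hs : sdeg (- p) c a = 1 by apply/eqP; apply: contraNT Lca => /degL ->.
  by apply: eqXY => //; move: hs; rewrite sdegN; lia.
by rewrite !eform1_homog1E // -[1]opprK !supp.
Qed.

End InvariantForm.

Lemma mxtrace_mul_deg0 (R : comUnitRingType) m (M N M' N' : 'M[R]_8) :
  (forall a c, M' a c = if sdeg m a c == 0 then M a c else 0) ->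
  (forall a c, N' a c = if sdeg (- m) a c == 0 then N a c else 0) ->
  (forall a c, 1 <= sdeg m a c -> M a c = 0) ->
  (forall a c, 1 <= sdeg (- m) a c -> N a c = 0) ->
  \tr (M' *m N') = \tr (M *m N).
Proof.
move=> eqM eqN degM degN; rewrite !mxtrace_mulE.
apply: eq_bigr => a _; apply: eq_bigr => c _; rewrite eqM eqN sdegN.
case: (ltgtP (sdeg m a c) 0) => hs; last by rewrite hs oppr0 eqxx.
- by rewrite mul0r degN ?mulr0 // sdegN; lia.
- by rewrite mul0r degM ?mul0r //; lia.
Qed.

Section Pairings.
Variable R : comUnitRingType.
Variable w : int -> 'M[R]_8.
Hypothesis w_neg : deg_lt 0 w.

Local Notation ad := (adw w 1).

Lemma eform_Upart_d_s L : homog 1 L ->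
  eform 0 (d_s R) (Upart w L) = - eform 1 (Elt w 0 0) L.
Proof.
move=> homL; have [_ _ dcL] := homL.
have diag_part : nform hs_mx (lp (Upart w L) 0) = nform hs_mx (lp (ad L) 0).
  congr (_ * _); rewrite mxtrace_mulC [RHS]mxtrace_mulC.
  apply: mxtrace_mul_supp => a c; rewrite hs_mxE.
  have [<-|] := eqVneq c a; last by rewrite mulr0n eqxx.
  by rewrite lp_Upart // /sdeg mulr0 add0r subrr.
(* [d_s, w] = -w on the entries of degree -1, the only ones that pair with L. *)
have ad_ds_w : eform 1 (eopp (Elt w 0 0)) L =
    eform 1 (Elt (fun n => mcom hs_mx (w n) + (4 * n)%:~R *: w n) 0 0) L.
  by apply: eform1_homog1_supp => // p a c _ hs; rewrite [RHS]mcom_hs_mx hs !mxE mulN1r.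
rewrite -eformNl ad_ds_w eform1_homog1E // eform_d_s kc_Upart // kc_ad // diag_part.
rewrite lp_ad_0 // nformDr -!nform_mcoml /= !nformDl !nformZl; ring.
Qed.

Section TwoHomogeneous.
Variables Li Lj : elt R.
Hypotheses (homLi : homog 1 Li) (homLj : homog 1 Lj).

Let dcLi : dc Li = 0. Proof. by case: homLi. Qed.
Let dcLj : dc Lj = 0. Proof. by case: homLj. Qed.

Lemma eform_ad_homog1 : (forall p, lp (ebr 1 Li Lj) p = 0) -> eform 1 (ad Li) Lj = 0.
Proof.
move=> Lij0; have comm p : zsum (-1) 1 (fun m => mcom (lp Li m) (lp Lj (p - m))) = 0.
  by rewrite -(Lij0 p) /= dcLi dcLj !mul0r !scale0r subr0 addr0.
have c00 := comm 0; have c01 := comm 1; have c11 := comm 2.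
rewrite !zsum_m11 !(homog1_lp_m1 homLi) !mcom0l !add0r in c00 c01 c11.
rewrite (homog1_lp_m1 homLj) mcom0r addr0 in c00.
rewrite (homog1_lp2 homLj) mcom0r add0r in c11.
rewrite eform1_homog1E // lp_ad_m1 // lp_ad_0 // (homog1_lp_m1 homLi) mcom0r addr0 /nform.
(* Abstract the bracket, so that the rewrites below cannot unfold it. *)
have := @mxtrace_mcoml R; move: c00 c01 c11; move: (@mcom R) => br c00 c01 c11 br_inv.
rewrite !mulmxDl !mxtraceD !br_inv c00 c11 !mulmx0 !mxtrace0 add0r addr0.
by rewrite -mulrDr -mxtraceD -mulmxDr c01 mulmx0 mxtrace0 mulr0.
Qed.

Lemma eform_ad2_homog1 : eform 1 (ad (ad Li)) Lj = - eform 1 (ad Li) (ad Lj).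
Proof.
rewrite eform1_homog1E // eform1_dcE //.
rewrite (@lp_ad_m1 _ w (ad Li)) // (@lp_ad_0 _ w (ad Li)) //.
rewrite (@lp_ad_m1 _ w Lj) // (@lp_ad_0 _ w Lj) // (@lp_ad_1 _ w Lj) //.
rewrite (homog1_lp_m1 homLj) mcom0r addr0.
move: (lp (ad Li) (-1)) (lp (ad Li) 0) (lp (ad Li) 1) => Xm X0 X1.
have := @mxtrace_mcomr R; rewrite /nform; move: (@mcom R) => br br_inv.
by rewrite !mulmxDl !mulmxDr !mxtraceD !br_inv; ring.
Qed.

Lemma eform_Upart : eform 1 (Upart w Li) (Upart w Lj) = eform 1 (ad Li) (ad Lj).
Proof.
have deg0 m : -1 <= m <= 1 -> nform (lp (Upart w Li) m) (lp (Upart w Lj) (- m)) =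
                              nform (lp (ad Li) m) (lp (ad Lj) (- m)).
  move=> hm; congr (_ * _); apply: mxtrace_mul_deg0 => a c.
  - by apply: lp_Upart => //; lia.
  - by apply: lp_Upart => //; lia.
  - exact: ad_deg_lt.
  - exact: ad_deg_lt.
by rewrite !eform1_dcE ?dc_Upart // -[1]opprK !deg0.
Qed.

Lemma eform_Sato (dw : int -> 'M[R]_8) : deg_lt 0 dw ->
  dlogW w dw = eadd (posproj (AdW w 1 Li)) (eopp (AdW w 1 Li)) ->
  eform 1 (Elt dw 0 0) Lj = - (eform 1 (ad Li) Lj + halfR R * eform 1 (ad (ad Li)) Lj).
Proof.
move=> dw_neg Sato; rewrite -eformZl -eformDl -eformNl.
rewrite (@eform1_homog1_supp _ _ (dlogW w dw)) // => [|p a c _ hs]; last first.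
  by rewrite dlogW_lpE.
rewrite Sato; apply: eform1_homog1_supp => // p a c hp hs.
by rewrite Sato_rhs_lpE //; [rewrite !mxE | lia].
Qed.

End TwoHomogeneous.
End Pairings.

Section RingMorphism.
Variables (R R' : comUnitRingType) (f : {rmorphism R -> R'}).

Lemma homog_emap k X : homog k X -> homog k (emap f X).
Proof.
case=> degX kcX dcX; split; rewrite /= ?kcX ?dcX ?rmorph0 //.
by move=> p a b hs; rewrite mxE degX ?rmorph0.
Qed.

Lemma map_mcom (x y : 'M[R]_8) : map_mx f (mcom x y) = mcom (map_mx f x) (map_mx f y).
Proof. by rewrite /mcom map_mxB !map_mxM. Qed.

Lemma lp_ebr_emap N X Y p :
  lp (ebr N (emap f X) (emap f Y)) p = map_mx f (lp (ebr N X Y) p).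
Proof.
rewrite /= map_mxB map_mxD !map_mxZ !rmorphM !rmorph_int /zsum raddf_sum.
by congr (_ + _ - _); apply: eq_bigr => i _; symmetry; apply: map_mcom.
Qed.

Lemma map_hs_mx : map_mx f hs_mx = hs_mx.
Proof. by apply/matrixP => a b; rewrite !mxE rmorphMn rmorph_int. Qed.

End RingMorphism.

Section Derivation.
Variables (C : fieldType) (S : comUnitAlgType C) (d : S -> S).
Hypothesis d_der : is_derivation d.
Hypothesis two_neq0 : (2%:R : C) != 0.

Lemma derD x y : d (x + y) = d x + d y. Proof. by case: d_der. Qed.

Lemma der0 : d 0 = 0.
Proof. by apply: (@addrI _ (d 0)); rewrite -derD !addr0. Qed.

Lemma derN x : d (- x) = - d x.
Proof. by apply: (@addrI _ (d x)); rewrite -derD !subrr der0. Qed.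

Lemma der_sum I r (P : pred I) (F : I -> S) :
  d (\sum_(i <- r | P i) F i) = \sum_(i <- r | P i) d (F i).
Proof. exact: (big_morph d derD der0). Qed.

Lemma derMl_alg (c : C) x : d (c%:A * x) = c%:A * d x.
Proof. by case: d_der => _ [derZ _]; rewrite !mulr_algl derZ. Qed.

Lemma derMr_alg (c : C) x : d (x * c%:A) = d x * c%:A.
Proof. by rewrite ![_ * c%:A]mulrC derMl_alg. Qed.

Lemma halfR_alg : halfR S = (halfR C)%:A.
Proof. by rewrite /halfR -(rmorph_nat (in_alg S)) -rmorphV // unitfE. Qed.

Lemma der_nform_mapl (A : 'M[C]_8) (M : 'M[S]_8) :
  d (nform (map_mx (in_alg S) A) M) = nform (map_mx (in_alg S) A) (map_mx d M).
Proof.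
rewrite /nform halfR_alg derMl_alg !mxtrace_mulE der_sum; congr (_ * _).
by apply: eq_bigr => a _; rewrite der_sum; apply: eq_bigr => c _; rewrite !mxE derMl_alg.
Qed.

Lemma der_nform_mapr (M : 'M[S]_8) (A : 'M[C]_8) :
  d (nform M (map_mx (in_alg S) A)) = nform (map_mx d M) (map_mx (in_alg S) A).
Proof.
rewrite /nform halfR_alg derMl_alg !mxtrace_mulE der_sum; congr (_ * _).
by apply: eq_bigr => a _; rewrite der_sum; apply: eq_bigr => c _; rewrite !mxE derMr_alg.
Qed.

Lemma der_eform_d_s (Y : elt S) : eform 0 (d_s S) (emap d Y) = d (eform 0 (d_s S) Y).
Proof.
rewrite !eform_d_s -(map_hs_mx (in_alg S)) derD der_nform_mapl.
by rewrite -(rmorph_nat (in_alg S)) derMl_alg.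
Qed.

Lemma der_eform_loop_alg N (g : int -> 'M[S]_8) (Y : elt C) :
  d (eform N (Elt g 0 0) (emap (in_alg S) Y)) =
  eform N (Elt (fun p => map_mx d (g p)) 0 0) (emap (in_alg S) Y).
Proof.
rewrite /eform /= !mul0r !addr0 /zsum der_sum.
by apply: eq_bigr => k _; rewrite der_nform_mapr.
Qed.

End Derivation.

Theorem lemma2p1 (R0 : realType) (S : comUnitAlgType R0[i])
  (dt : nat -> 'I_2 -> S -> S)
  (Hder : forall n i, is_derivation (dt n i))
  (Hcomm : forall n i m j x, dt n i (dt m j x) = dt m j (dt n i x))
  (Lam : nat -> 'I_2 -> elt R0[i])
  (HL0 : Lam 0%N 0 = Lam11 R0[i] /\ Lam 0%N 1 = Lam12 R0[i])
  (HLso : forall n i p, so8 (lp (Lam n i) p))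
  (HLdeg : forall n i, (forall p a b, sdeg p a b != (2 * n + 1)%N%:Z ->
                                      lp (Lam n i) p a b = 0)
                       /\ kc (Lam n i) = 0 /\ dc (Lam n i) = 0)
  (HLs : forall n i, exists c, ebr 1 (Lam11 R0[i]) (Lam n i) = escale c (eK R0[i]))
  (HLcomm : forall n m i j, ebr (Posz n + 1) (Lam n i) (Lam m j) = ezero R0[i])
  (w : int -> 'M[S]_8)
  (Hw : in_gneg w) :
  let LamS n i := emap (in_alg S) (Lam n i) in
  let B n i := posproj (AdW w (Posz n + 1) (LamS n i)) in
  (forall n i,
     dlogW w (fun p => map_mx (dt n i) (w p)) =
     eadd (B n i) (eopp (AdW w (Posz n + 1) (LamS n i)))) ->
  let U i := eadd (B 0%N i) (eopp (LamS 0%N i)) in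
  forall i j : 'I_2,
    eform 0 (@d_s S) (emap (dt 0%N i) (U j)) + @halfR S * eform 1 (U i) (U j) = 0.
Proof.
move=> LamS B Sato U i j.
have two_neq0 : (2%:R : R0[i]) != 0 by rewrite pnatr_eq0.
have w_neg : deg_lt 0 w := Hw.2.
have homL k : homog 1 (LamS 0%N k).
  by have [degL [kcL dcL]] := HLdeg 0%N k; apply: homog_emap; split.
have comm p : lp (ebr 1 (LamS 0%N i) (LamS 0%N j)) p = 0.
  by rewrite lp_ebr_emap (HLcomm 0%N 0%N i j) map_mx0.
have der := Hder 0%N i.
have dw_neg : deg_lt 0 (fun p => map_mx (dt 0%N i) (w p)).
  by move=> p a b hs; rewrite mxE w_neg ?(der0 der).
have -> : U i = Upart w (LamS 0%N i) by [].
have -> : U j = Upart w (LamS 0%N j) by [].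
rewrite (der_eform_d_s der two_neq0) (eform_Upart_d_s w_neg (homL j)) (derN der).
rewrite (der_eform_loop_alg der two_neq0 1 w (Lam 0%N j)).
rewrite (eform_Sato w_neg (homL i) (homL j) dw_neg (Sato 0%N i)).
rewrite (eform_ad_homog1 w (homL i) (homL j) comm) (eform_ad2_homog1 w _ (homL j)).
by rewrite (eform_Upart w_neg (homL i) (homL j)) opprK add0r mulrN addNr.
Qed.
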